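(* Let $r\ge1$ and let $D_r$ be the $r\times(2r-1)$ matrix with rows indexed by $1,\dots,r$ and columns indexed by $0,1,\dots,2r-2$, whose $(k,c)$ entry is $1$ if $c=r-k$ or $c=r-2+k$, and $0$ otherwise (so row $1$ has a single $1$ in column $r-1$, and row $k\ge2$ has $1$'s in columns $r-k$ and $r-2+k$). For a partition $\lambda$ with $l(\lambda)\le r$ and $\lambda_1\le r-1$, let $I(\lambda)=\{\lambda_r,\lambda_{r-1}+1,\dots,\lambda_1+r-1\}\subseteq\{0,\dots,2r-2\}$ and let $\Delta_{I(\lambda)}(D_r)$ be the $r\times r$ submatrix of $D_r$ consisting of the columns indexed by $I(\lambda)$ (in increasing order). Then $$\det\Delta_{I(\lambda)}(D_r)=\begin{cases}(-1)^{r(r-1)/2+|\lambda|/2}&\text{if }\lambda\in\mathcal P_r,\\ 0&\text{otherwise.}\end{cases}$$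
   Context: Partitions: a partition $\lambda=(\lambda_1\ge\lambda_2\ge\cdots)$ of nonnegative integers with finitely many nonzero parts; $l(\lambda)$ is the number of nonzero parts, $|\lambda|=\sum_i\lambda_i$. In Frobenius notation $\lambda=(\alpha_1,\dots,\alpha_d\,|\,\beta_1,\dots,\beta_d)$ where $d=\#\{i:\lambda_i\ge i\}$, $\alpha_i=\lambda_i-i$, $\beta_i=\lambda'_i-i$ ($\lambda'$ the conjugate partition). For an integer $m\ge 0$, $\mathcal{P}_m$ is the set of partitions $\lambda$ with $l(\lambda)\le m$ of the form $(\alpha_1,\dots,\alpha_d\,|\,\alpha_1+1,\dots,\alpha_d+1)$ (the empty partition included; $|\lambda|$ is then even). *)

From HB Require Import structures.
From mathcomp Require Import all_boot all_order all_algebra.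
From mathcomp Require Import zify.
Set Implicit Arguments. Unset Strict Implicit. Unset Printing Implicit Defensive.
Import Order.TTheory GRing.Theory Num.Theory.

(* Partitions are represented as finite nonincreasing sequences of positive
   naturals (the nonzero parts).  lambda_i (1-indexed) is [part lam i];
   parts beyond the length are 0. *)
Definition is_partition (lam : seq nat) : bool :=
  sorted geq lam && all (fun x => 0 < x) lam.

Definition part (lam : seq nat) (i : nat) : nat := nth 0 lam i.-1.

Definition plen (lam : seq nat) : nat := size lam.

Definition psize (lam : seq nat) : nat := sumn lam.

Definition conjpart (lam : seq nat) (i : nat) : nat :=
  count (fun x => i <= x) lam.

Definition frob_rank (lam : seq nat) : nat :=
  count (fun i => i <= part lam i) (iota 1 (size lam)).

Definition frob_alpha (lam : seq nat) (i : nat) : nat := part lam i - i.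
Definition frob_beta (lam : seq nat) (i : nat) : nat := conjpart lam i - i.

Definition inP (m : nat) (lam : seq nat) : bool :=
  [&& is_partition lam, plen lam <= m &
      all (fun i => frob_beta lam i == frob_alpha lam i + 1)
          (iota 1 (frob_rank lam))].

(* Entry of D_r in row k (1-indexed, 1 <= k <= r) and column c (0 <= c <= 2r-2):
   1 iff c = r - k or c = r - 2 + k (written without truncated subtraction). *)
Definition Dentry (r k c : nat) : int :=
  if (c + k == r) || (c + 2 == r + k) then 1 else 0.

(* D_r : rows 'I_r (row i is k = i+1), columns 'I_(2r-1) (column j is c = j) *)
Definition Dmat (r : nat) : 'M[int]_(r, (2 * r).-1) :=
  \matrix_(i < r, j < (2 * r).-1) Dentry r i.+1 j.

Lemma r_le_2r1 (r : nat) : r <= (2 * r).-1.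
Proof. case: r => // r; rewrite mulnS /=; lia. Qed.

(* The i-th (0-based) element, in increasing order, of
   I(lambda) = { lambda_r, lambda_{r-1}+1, ..., lambda_1 + r - 1 },
   namely lambda_{r-i} + i. *)
Definition Ielem (r : nat) (lam : seq nat) (i : nat) : nat := part lam (r - i) + i.

(* column selector; the default value is only used when out of range *)
Definition Icol (r : nat) (lam : seq nat) (i : 'I_r) : 'I_((2 * r).-1) :=
  insubd (widen_ord (r_le_2r1 r) i) (Ielem r lam i).

Definition DeltaI (r : nat) (lam : seq nat) : 'M[int]_r :=
  colsub (Icol lam) (Dmat r).

From HB Require Import structures.
From mathcomp Require Import all_boot all_order all_algebra.
From mathcomp Require Import zify.
Set Implicit Arguments. Unset Strict Implicit. Unset Printing Implicit Defensive.

(* Expand det Δ along its last row. In D_{r+1} that row has its two 1's in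
   columns 0 and 2r, and these two columns of D_{r+1} coincide. Column 0 is
   selected iff λ_{r+1} = 0, column 2r iff λ_1 = r. If both or neither are
   selected the determinant vanishes, and λ ∉ P_{r+1} because λ ∈ P forces
   l(λ) = λ_1 + 1 (the first Frobenius condition). If only column 0 is
   selected, the complementary minor is Δ_{I(λ)}(D_r) with sign (-1)^r; if
   only column 2r is selected, then l(λ) = λ_1 + 1 = r + 1 and the minor is
   Δ_{I(μ)}(D_r) for μ = λ with its principal hook removed. Removing that
   hook shifts the Frobenius coordinates by one and subtracts 2(r+1) from
   |λ|, so induction on r gives the sign (-1)^{r(r-1)/2 + |λ|/2}. *)

Lemma geq_trans : transitive geq.
Proof. exact: rev_trans leq_trans. Qed.

Lemma part_le_head lam i : sorted geq lam -> part lam i <= part lam 1.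
Proof.
move=> sorted_lam; rewrite /part.
have [lt_i_size | le_size_i] := ltnP i.-1 (size lam); last by rewrite nth_default.
have lt0_size : 0 < size lam by apply: leq_ltn_trans lt_i_size.
by apply: (sorted_leq_nth geq_trans leqnn 0 sorted_lam).
Qed.

Lemma part_gt0 lam i : is_partition lam -> 0 < i <= size lam -> 0 < part lam i.
Proof.
case/andP=> _ /allP pos_lam /andP[i_gt0 le_i_size].
by apply: pos_lam; apply: mem_nth; rewrite prednK.
Qed.

Lemma part_eq0 lam i : size lam < i -> part lam i = 0.
Proof. by move=> lt_size_i; rewrite /part nth_default //; lia. Qed.

Lemma is_partition_behead x t : is_partition (x :: t) -> is_partition t.
Proof. by case/andP=> /path_sorted sorted_t /andP[_ pos_t]; apply/andP. Qed.

Lemma inP_widen m lam : size lam <= m -> inP m.+1 lam = inP m lam.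
Proof. by rewrite /inP /plen => le_size_m; rewrite le_size_m (leqW le_size_m). Qed.

(* Removing the first column of the Young diagram of a partition [t]. *)
Definition decr_parts (t : seq nat) : seq nat := [seq y.-1 | y <- t & 1 < y].

Lemma part_decr_parts t i : sorted geq t -> part (decr_parts t) i = (part t i).-1.
Proof.
rewrite /part; elim: t i.-1 => [|x t IH] j sorted_xt; first by rewrite !nth_nil.
rewrite /decr_parts /=; case: ifP => [x_gt1 | x_le1].
  by case: j => [|j] //=; apply: IH; apply: path_sorted sorted_xt.
have -> : [seq y <- t | 1 < y] = [::].
  apply/eqP; rewrite -(negbK (_ == _)) -has_filter; apply/hasP => -[y y_t y_gt1].
  by move/allP: (order_path_min geq_trans sorted_xt) => /(_ y y_t) /=; lia.
rewrite nth_nil; case: j => [|j] /=; first lia.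
by have := part_le_head j.+2 sorted_xt; rewrite /part /=; lia.
Qed.

Lemma decr_parts_partition t : sorted geq t -> is_partition (decr_parts t).
Proof.
move=> sorted_t; apply/andP; split.
  rewrite /decr_parts sorted_map.
  apply: sub_sorted (sorted_filter geq_trans _ sorted_t) => a b /=; lia.
by apply/allP => y /mapP [z]; rewrite mem_filter => /andP[z_gt1 _] ->; lia.
Qed.

Lemma size_decr_parts t : size (decr_parts t) <= size t.
Proof. by rewrite size_map size_filter count_size. Qed.

Lemma sumn_decr_parts t :
  all (fun x => 0 < x) t -> sumn (decr_parts t) + size t = sumn t.
Proof.
elim: t => [|x t IH] //= /andP[x_gt0 pos_t]; rewrite /decr_parts /=.
by case: ifP => x_gt1 /=; rewrite -(IH pos_t) /decr_parts; lia.
Qed.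

Lemma conjpart_decr_parts t i :
  0 < i -> conjpart (decr_parts t) i = conjpart t i.+1.
Proof.
move=> i_gt0; rewrite /conjpart count_map count_filter.
by apply: eq_count => y /=; apply/andP/idP; lia.
Qed.

Lemma frob_rank_iota s N :
  size s <= N -> frob_rank s = count (fun i => i <= part s i) (iota 1 N).
Proof.
move=> le_size_N; rewrite /frob_rank -(subnKC le_size_N) iotaD count_cat.
rewrite -[LHS]addn0; congr (_ + _); apply/esym/eqP; rewrite -leqn0 leqNgt -has_count.
apply/hasP => -[i]; rewrite mem_iota /part => /andP[lt_size_i _].
by rewrite nth_default /=; lia.
Qed.

Lemma frob_rank_le_head s : sorted geq s -> frob_rank s <= part s 1.
Proof.
move=> sorted_s; rewrite /frob_rank -size_filter -[X in _ <= X](size_iota 1).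
apply: uniq_leq_size; first by rewrite filter_uniq ?iota_uniq.
move=> i; rewrite mem_filter mem_iota => /andP[le_i_part /andP[i_gt0 _]].
by have := part_le_head i sorted_s; rewrite mem_iota; lia.
Qed.

Section RemoveHook.

Variables (x : nat) (t : seq nat).
Hypothesis xt_part : is_partition (x :: t).

Let x_gt0 : 0 < x. Proof. by case/andP: xt_part => _ /andP[]. Qed.
Let t_sorted : sorted geq t. Proof. by case/andP: xt_part => /path_sorted. Qed.
Let t_pos : all (fun y => 0 < y) t. Proof. by case/and3P: xt_part. Qed.

Lemma head_decr_parts_lt : part (decr_parts t) 1 < x.
Proof.
have := part_le_head 2 (andP xt_part).1.
by rewrite part_decr_parts // /part /=; lia.
Qed.

Lemma frob_rank_cons : frob_rank (x :: t) = (frob_rank (decr_parts t)).+1.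
Proof.
rewrite (frob_rank_iota (leqnn _)) (frob_rank_iota (size_decr_parts t)) /=.
rewrite /part /= x_gt0 -[2]/(1 + 1) iotaDl count_map; congr _.+1.
apply: eq_in_count => i; rewrite mem_iota => /andP[i_gt0 _] /=.
have := part_decr_parts i t_sorted; rewrite /part => ->.
by case: i i_gt0 => //= i _; lia.
Qed.

Lemma frob_alpha_cons i : frob_alpha (x :: t) i.+2 = frob_alpha (decr_parts t) i.+1.
Proof. by rewrite /frob_alpha (part_decr_parts _ t_sorted) /part /=; lia. Qed.

Lemma frob_beta_cons i :
  i.+2 <= x -> frob_beta (x :: t) i.+2 = frob_beta (decr_parts t) i.+1.
Proof.
move=> le_i_x; rewrite /frob_beta conjpart_decr_parts // /conjpart /= le_i_x.
by rewrite add1n subSS.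
Qed.

Lemma frob_cond_first :
  (frob_beta (x :: t) 1 == frob_alpha (x :: t) 1 + 1) = (size t == x).
Proof.
rewrite /frob_beta /frob_alpha /conjpart /part /=.
have -> : count (fun y => 0 < y) t = size t by apply/eqP; rewrite -all_count.
by apply/eqP/eqP; lia.
Qed.

Lemma inP_cons m m' :
  size (x :: t) <= m -> size (decr_parts t) <= m' ->
  inP m (x :: t) = (size t == x) && inP m' (decr_parts t).
Proof.
move=> le_size_m le_size_m'.
rewrite /inP xt_part decr_parts_partition // /plen le_size_m le_size_m' /=.
rewrite frob_rank_cons /= frob_cond_first; congr (_ && _).
rewrite -[2]/(1 + 1) iotaDl all_map; apply: eq_in_all => i.
rewrite mem_iota => /andP[i_gt0 le_i_rank] /=.
have := frob_rank_le_head (andP (decr_parts_partition t_sorted)).1.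
have := head_decr_parts_lt.
case: i i_gt0 le_i_rank => // i _ le_i_rank lt_head_x le_rank_head.
by rewrite add1n frob_alpha_cons frob_beta_cons //; lia.
Qed.

Lemma psize_cons : psize (x :: t) = psize (decr_parts t) + size t + x.
Proof. by rewrite /psize /= -(sumn_decr_parts t_pos); lia. Qed.

End RemoveHook.

Lemma Ielem_first r lam : Ielem r.+1 lam 0 = part lam r.+1.
Proof. by rewrite /Ielem subn0 addn0. Qed.

Lemma Ielem_last r lam : Ielem r.+1 lam r = part lam 1 + r.
Proof. by rewrite /Ielem subSnn. Qed.

Lemma Ielem_succ r lam j : Ielem r.+1 lam j.+1 = (Ielem r lam j).+1.
Proof. by rewrite /Ielem subSS addnS. Qed.

Lemma Ielem_bounds r lam j :
  sorted geq lam -> part lam 1 <= r -> j <= r ->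
  (0 < j) || (0 < part lam r.+1) -> (j < r) || (part lam 1 < r) ->
  0 < Ielem r.+1 lam j < 2 * r.
Proof.
move=> sorted_lam le_head_r le_j_r; rewrite /Ielem.
have := part_le_head (r.+1 - j) sorted_lam.
have [-> | j_gt0] := posnP j; first by rewrite subn0; lia.
have [-> | ne_j_r] := eqVneq j r; first by rewrite subSnn; lia.
lia.
Qed.

Lemma Ielem_decr_parts r x t j :
  is_partition (x :: t) -> size t = r -> j < r ->
  Ielem r.+1 (x :: t) j = (Ielem r (decr_parts t) j).+1.
Proof.
move=> xt_part size_t lt_j_r; have t_part := is_partition_behead xt_part.
rewrite /Ielem part_decr_parts; last by case/andP: t_part.
have : 0 < part t (r - j) by apply: part_gt0; lia.
rewrite /part subSn ?(ltnW lt_j_r) //; move: lt_j_r; rewrite -subn_gt0.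
by case: (r - j) => //= k _; lia.
Qed.

Lemma half_mul_pred_succ r : (r.+1 * (r.+1 - 1)) %/ 2 = (r * (r - 1)) %/ 2 + r.
Proof. by rewrite !subn1 !divn2 -!bin2 binS bin1 addnC. Qed.

Import Order.TTheory GRing.Theory Num.Theory.
Local Open Scope ring_scope.

Lemma sign_addn_double n m : (-1) ^+ (n + m.*2) = (-1) ^+ n :> int.
Proof. by rewrite -signr_odd oddD odd_double addbF signr_odd. Qed.

Definition Dcols r (g : 'I_r -> nat) : 'M[int]_r :=
  \matrix_(i, j) Dentry r i.+1 (g j).

Lemma eq_Dcols r (g1 g2 : 'I_r -> nat) : g1 =1 g2 -> Dcols g1 = Dcols g2.
Proof. by move=> eq_g; apply/matrixP => i j; rewrite !mxE eq_g. Qed.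

Lemma Dentry_succ r k c : Dentry r.+1 k c.+1 = Dentry r k c.
Proof. by rewrite /Dentry !addSn !eqSS. Qed.

Lemma Dentry_last_row r c :
  Dentry r.+1 r.+1 c = if (c == 0)%N || (c == 2 * r)%N then 1 else 0.
Proof. by rewrite /Dentry; do 2 case: ifP => /=; lia. Qed.

Lemma Dentry_first_last r k : Dentry r.+1 k 0 = Dentry r.+1 k (2 * r).
Proof. by rewrite /Dentry; do 2 case: ifP => /=; lia. Qed.

Lemma det_Dcols_expand r (g : 'I_r.+1 -> nat) (j0 : 'I_r.+1) :
  (g j0 == 0)%N || (g j0 == 2 * r)%N ->
  (forall j, j != j0 -> (0 < g j < 2 * r)%N) ->
  \det (Dcols g) = (-1) ^+ (r + j0) * \det (Dcols (fun k => (g (lift j0 k)).-1)).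
Proof.
move=> g_j0 g_inner; rewrite (expand_det_row _ ord_max) (bigD1 j0) //=.
rewrite big1 => [|j /g_inner g_j]; last first.
  by rewrite mxE Dentry_last_row ifF ?mul0r //; lia.
rewrite addr0 mxE Dentry_last_row g_j0 mul1r /cofactor; congr (_ * \det _).
apply/matrixP => i k; rewrite !mxE lift_max.
have /g_inner : lift j0 k != j0 by rewrite eq_sym neq_lift.
by case: (g _) => [|c] //= _; rewrite Dentry_succ.
Qed.

Lemma det_Dcols_last_row_eq0 r (g : 'I_r.+1 -> nat) :
  (forall j, (0 < g j < 2 * r)%N) -> \det (Dcols g) = 0.
Proof.
move=> g_inner; rewrite (expand_det_row _ ord_max) big1 // => j _.
by rewrite mxE Dentry_last_row ifF ?mul0r //; have := g_inner j; lia.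
Qed.

Lemma det_Dcols_first_last r (g : 'I_r.+1 -> nat) (j1 j2 : 'I_r.+1) :
  j1 != j2 -> g j1 = 0%N -> g j2 = (2 * r)%N -> \det (Dcols g) = 0.
Proof.
move=> ne_j12 g_j1 g_j2; rewrite -det_tr (determinant_alternate ne_j12) // => i.
by rewrite !mxE g_j1 g_j2 Dentry_first_last.
Qed.

(* [DeltaI] with its column indices kept in [nat]: unlike ['I_(2r-1)], this
   form is stable under taking the minors of [det_Dcols_expand]. *)
Definition Delta r (lam : seq nat) : 'M[int]_r := Dcols (fun j : 'I_r => Ielem r lam j).

Lemma DeltaI_Delta r lam :
  sorted geq lam -> (part lam 1 <= r - 1)%N -> DeltaI r lam = Delta r lam.
Proof.
move=> sorted_lam le_head; apply/matrixP => i j; rewrite !mxE /Icol val_insubd.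
have lt_j_r := ltn_ord j; have le_part_head := part_le_head (r - j) sorted_lam.
by rewrite ifT // /Ielem; lia.
Qed.

Lemma det_Delta_hook r t :
  is_partition (r :: t) -> size t = r ->
  \det (Delta r.+1 (r :: t)) = \det (Delta r (decr_parts t)).
Proof.
move=> rt_part size_t; have sorted_rt := (andP rt_part).1.
rewrite /Delta (det_Dcols_expand (j0 := ord_max)); last first.
- move=> j ne_j_max; have lt_j_r : (j < r)%N by rewrite ltn_neqAle -ltnS ltn_ord andbT.
  apply: Ielem_bounds; rewrite ?lt_j_r ?orbT //=; first exact: ltnW.
  by rewrite orbC -/(part (r :: t) r.+1) part_gt0 //= size_t.
- by rewrite Ielem_last /= addnn -mul2n eqxx orbT.
rewrite addnn -signr_odd odd_double expr0 mul1r; congr (\det _).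
by apply: eq_Dcols => k; rewrite lift_max Ielem_decr_parts.
Qed.

Lemma det_Delta_short r lam :
  is_partition lam -> (size lam <= r)%N -> (part lam 1 < r)%N ->
  \det (Delta r.+1 lam) = (-1) ^+ r * \det (Delta r lam).
Proof.
move=> lam_part le_size_r lt_head_r; have sorted_lam := (andP lam_part).1.
rewrite /Delta (det_Dcols_expand (j0 := ord0)); last first.
- move=> j ne_j_0; apply: Ielem_bounds; rewrite ?lt_head_r ?orbT ?(ltnW lt_head_r) //.
  + by rewrite -ltnS.
  + by rewrite lt0n ne_j_0.
- by rewrite /= Ielem_first part_eq0.
rewrite addn0 (@eq_Dcols r _ (fun j => Ielem r lam j)) // => k.
by rewrite lift0 Ielem_succ.
Qed.

Lemma det_Delta_first_last r lam :
  (0 < r)%N -> (size lam <= r)%N -> part lam 1 = r -> \det (Delta r.+1 lam) = 0.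
Proof.
move=> r_gt0 le_size_r head_eq.
apply: (det_Dcols_first_last (j1 := ord0) (j2 := ord_max)).
- by rewrite -val_eqE /= eq_sym -lt0n.
- by rewrite /= Ielem_first part_eq0.
- by rewrite Ielem_last head_eq addnn mul2n.
Qed.

Lemma det_Delta_last_row_eq0 r lam :
  is_partition lam -> size lam = r.+1 -> (part lam 1 < r)%N ->
  \det (Delta r.+1 lam) = 0.
Proof.
move=> lam_part size_lam lt_head_r; apply: det_Dcols_last_row_eq0 => j.
apply: Ielem_bounds.
- by case/andP: lam_part.
- exact: ltnW.
- by rewrite -ltnS.
- by rewrite part_gt0 ?orbT ?size_lam ?leqnn.
- by rewrite lt_head_r orbT.
Qed.

Lemma det_Delta r lam :
  is_partition lam -> (size lam <= r.+1)%N -> (part lam 1 <= r)%N ->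
  \det (Delta r.+1 lam) =
    if inP r.+1 lam then (-1) ^+ ((r.+1 * (r.+1 - 1)) %/ 2 + psize lam %/ 2)%N else 0.
Proof.
elim: r lam => [|r IH] lam lam_part le_size le_head.
  case: lam lam_part le_size le_head => [|x t] xt_part; last first.
    by have := @part_gt0 _ 1 xt_part; rewrite /part /=; lia.
  by rewrite /Delta det_mx11 mxE.
have [size_eq | le_size_r] : size lam = r.+2 \/ (size lam <= r.+1)%N by lia.
  case: lam lam_part le_size le_head size_eq => // x t xt_part le_size le_head [size_t].
  have t_sorted : sorted geq t := path_sorted (andP xt_part).1.
  have le_decr_size : (size (decr_parts t) <= r.+1)%N by rewrite -size_t size_decr_parts.
  rewrite (inP_cons xt_part le_size le_decr_size) size_t.
  have [x_eq | x_lt] : x = r.+1 \/ (x < r.+1)%N by rewrite /part /= in le_head; lia.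
    subst x; rewrite det_Delta_hook // IH ?decr_parts_partition //; last first.
      by have := head_decr_parts_lt xt_part.
    rewrite eqxx andTb; case: ifP => // _.
    rewrite psize_cons // size_t (half_mul_pred_succ r.+1).
    have -> : ((psize (decr_parts t) + r.+1 + r.+1) %/ 2 = psize (decr_parts t) %/ 2 + r.+1)%N.
      by lia.
    by rewrite addnACA addnn sign_addn_double.
  by rewrite (gtn_eqF x_lt) det_Delta_last_row_eq0 //= size_t.
have [head_eq | head_lt] : part lam 1 = r.+1 \/ (part lam 1 < r.+1)%N by lia.
  case: lam lam_part le_size le_head le_size_r head_eq => [|x t] // xt_part le_size _ le_size_r.
  rewrite {1}/part /= => x_eq; subst x.
  have le_decr_size : (size (decr_parts t) <= r.+1)%N.
    by apply: leq_trans (size_decr_parts t) _; apply: ltnW.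
  by rewrite det_Delta_first_last // (inP_cons xt_part le_size le_decr_size) ltn_eqF.
rewrite det_Delta_short // IH // ?(inP_widen le_size_r).
case: ifP => _; last by rewrite mulr0.
by rewrite -exprD (half_mul_pred_succ r.+1) addnCA addnA.
Qed.

Theorem mainTheorem4 (r : nat) (lam : seq nat) :
  (1 <= r)%N ->
  is_partition lam ->
  (plen lam <= r)%N ->
  (part lam 1 <= r - 1)%N ->
  \det (DeltaI r lam) =
    (if inP r lam
     then (-1) ^+ ((r * (r - 1)) %/ 2 + psize lam %/ 2)%N
     else 0).
Proof.
case: r => // r _ lam_part le_size le_head.
rewrite DeltaI_Delta ?det_Delta //; last by case/andP: lam_part.
by rewrite subn1 in le_head.
Qed.
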